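(* Let $k\ge 2$, $\epsilon>0$, and let $\mathbf Q\in\mathcal D_{\epsilon,E}$ have output alphabet $\{1,\dots,L\}$. Then for every $j\in\{1,\dots,L\}$, $$\sum_{i=1}^k\frac{q_{ji}^2}{q_j^2}\ \le\ k\Big(1+(e^{\epsilon}-1)^2\frac{d^\ast(k-d^\ast)}{(d^\ast e^{\epsilon}+k-d^\ast)^2}\Big).$$
   Context: A mechanism $\mathbf Q$ with input alphabet $\{1,\dots,k\}$ and finite output alphabet $\{1,\dots,L\}$ is a conditional distribution $\mathbf Q(j\mid i)$; write $q_{ji}=\mathbf Q(j\mid i)$ and $q_j=\frac1k\sum_{i=1}^k q_{ji}$. $\mathcal D_{\epsilon,E}$ is the set of such finite-output mechanisms that are $\epsilon$-locally differentially private ($q_{ji}\le e^{\epsilon}q_{ji'}$ for all $j,i,i'$) and satisfy $q_{ji}/\min_{i'\in[k]}q_{ji'}\in\{1,e^{\epsilon}\}$ for all $j\in[L]$, $i\in[k]$. Let $d^\ast\in\arg\min_{1\le d\le k-1}\frac{(de^{\epsilon}+k-d)^2}{d(k-d)}$ (ties broken arbitrarily). *)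

(* concrete reals R. Indices are 1-based naturals. *)
From Stdlib Require Import Reals Lra Lia.
Open Scope R_scope.

Fixpoint sum1 (n : nat) (f : nat -> R) : R :=
  match n with
  | O => 0
  | S m => sum1 m f + f n
  end.

Fixpoint min1 (k : nat) (f : nat -> R) : R :=
  match k with
  | O => 0
  | S O => f 1%nat
  | S m => Rmin (min1 m f) (f k)
  end.

(* q j i = Q(j | i): a mechanism with inputs {1..k}, outputs {1..L} *)
Definition is_mechanism (k L : nat) (q : nat -> nat -> R) : Prop :=
  (forall j i, (1 <= j <= L)%nat -> (1 <= i <= k)%nat -> 0 <= q j i) /\
  (forall i, (1 <= i <= k)%nat -> sum1 L (fun j => q j i) = 1).

Definition eps_LDP (k L : nat) (eps : R) (q : nat -> nat -> R) : Prop :=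
  forall j i i', (1 <= j <= L)%nat -> (1 <= i <= k)%nat -> (1 <= i' <= k)%nat ->
    q j i <= exp eps * q j i'.

(* the class D_{eps,E}; the ratio q_ji / min_i' q_ji' must be defined, so
   we require the minimum to be positive *)
Definition in_D_eps_E (k L : nat) (eps : R) (q : nat -> nat -> R) : Prop :=
  is_mechanism k L q /\ eps_LDP k L eps q /\
  forall j i, (1 <= j <= L)%nat -> (1 <= i <= k)%nat ->
    0 < min1 k (q j) /\
    (q j i / min1 k (q j) = 1 \/ q j i / min1 k (q j) = exp eps).

Definition qbar (k : nat) (q : nat -> nat -> R) (j : nat) : R :=
  / INR k * sum1 k (fun i => q j i).

Definition dobj (k : nat) (eps : R) (d : nat) : R :=
  (INR d * exp eps + INR k - INR d) ^ 2 / (INR d * (INR k - INR d)).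

Definition is_dstar (k : nat) (eps : R) (d : nat) : Prop :=
  (1 <= d <= k - 1)%nat /\
  forall d', (1 <= d' <= k - 1)%nat -> dobj k eps d <= dobj k eps d'.

(* Write E = e^eps and m = min_i q_ji. Every entry of row j equals m or m E, so if
   a of them equal m E, the row sum is m (k + a (E - 1)) and the sum of squares is
   m^2 (k + a (E^2 - 1)). Hence the normalized second moment is
   k (1 + (E - 1)^2 g(a)) with g(a) = a (k - a) / (a E + k - a)^2, which vanishes
   for a in {0, k} and is 1 / dobj(a) otherwise; d* minimizes dobj, so it maximizes g. *)
From Stdlib Require Import Reals Lra Lia.
Open Scope R_scope.

Lemma sum1_div (n : nat) (f : nat -> R) (c : R) :
  sum1 n (fun i => f i / c) = sum1 n f / c.
Proof. induction n as [|n IHn]; simpl; [|rewrite IHn]; unfold Rdiv; ring. Qed.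

Lemma sum1_two_valued (n : nat) (f : nat -> R) (m E : R) :
  (forall i, (1 <= i <= n)%nat -> f i = m \/ f i = m * E) ->
  exists a : nat, (a <= n)%nat /\
    sum1 n f = m * (INR n + INR a * (E - 1)) /\
    sum1 n (fun i => f i ^ 2) = m ^ 2 * (INR n + INR a * (E ^ 2 - 1)).
Proof.
  induction n as [|n IHn]; intros Hf.
  - exists 0%nat; simpl; repeat split; [lia | ring | ring].
  - destruct IHn as [a [Ha [Hsum Hsq]]]; [intros i Hi; apply Hf; lia|].
    change (sum1 (S n) f) with (sum1 n f + f (S n)).
    change (sum1 (S n) (fun i => f i ^ 2)) with (sum1 n (fun i => f i ^ 2) + f (S n) ^ 2).
    rewrite Hsum, Hsq, S_INR.
    destruct (Hf (S n)) as [-> | ->]; [lia | exists a | exists (S a)];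
      rewrite ?S_INR; repeat split; try lia; ring.
Qed.

Definition dgain (k : nat) (eps : R) (d : nat) : R :=
  INR d * (INR k - INR d) / (INR d * exp eps + INR k - INR d) ^ 2.

Lemma dobj_pos (k : nat) (eps : R) (d : nat) :
  (1 <= d <= k - 1)%nat -> 0 < dobj k eps d.
Proof.
  intros Hd; unfold dobj.
  assert (0 < INR d) by (apply lt_0_INR; lia).
  assert (INR d < INR k) by (apply lt_INR; lia).
  pose proof (exp_pos eps).
  apply Rdiv_lt_0_compat; [apply pow_lt |]; nra.
Qed.

Lemma dgain_eq_inv_dobj (k : nat) (eps : R) (d : nat) :
  (1 <= d <= k - 1)%nat -> dgain k eps d = / dobj k eps d.
Proof.
  intros Hd; unfold dgain, dobj.
  assert (0 < INR d) by (apply lt_0_INR; lia).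
  assert (INR d < INR k) by (apply lt_INR; lia).
  pose proof (exp_pos eps).
  field; split; nra.
Qed.

Lemma dgain_le_dstar (k : nat) (eps : R) (dstar a : nat) :
  is_dstar k eps dstar -> (a <= k)%nat -> dgain k eps a <= dgain k eps dstar.
Proof.
  intros [Hdstar Hmin] Ha.
  rewrite (dgain_eq_inv_dobj k eps dstar Hdstar).
  destruct (Nat.eq_dec a 0) as [-> | Ha0]; [| destruct (Nat.eq_dec a k) as [-> | Hak]].
  - unfold dgain; simpl INR; rewrite !Rmult_0_l; unfold Rdiv; rewrite Rmult_0_l.
    now apply Rlt_le, Rinv_0_lt_compat, dobj_pos.
  - unfold dgain; rewrite Rminus_diag, Rmult_0_r; unfold Rdiv; rewrite Rmult_0_l.
    now apply Rlt_le, Rinv_0_lt_compat, dobj_pos.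
  - assert (Ha' : (1 <= a <= k - 1)%nat) by lia.
    rewrite (dgain_eq_inv_dobj k eps a Ha').
    apply Rinv_le_contravar; [apply dobj_pos |]; auto.
Qed.

Lemma second_moment_ratio_two_valued (k : nat) (eps m : R) (f : nat -> R) :
  (1 <= k)%nat -> 0 < m ->
  (forall i, (1 <= i <= k)%nat -> f i = m \/ f i = m * exp eps) ->
  exists a : nat, (a <= k)%nat /\
    sum1 k (fun i => f i ^ 2 / (/ INR k * sum1 k f) ^ 2) =
    INR k * (1 + (exp eps - 1) ^ 2 * dgain k eps a).
Proof.
  intros Hk Hm Hf.
  destruct (sum1_two_valued k f m (exp eps) Hf) as [a [Ha [Hsum Hsq]]].
  exists a; split; [exact Ha |].
  rewrite sum1_div, Hsum, Hsq; unfold dgain.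
  assert (0 < INR k) by (apply lt_0_INR; lia).
  assert (0 <= INR a <= INR k) by (split; [apply pos_INR | apply le_INR; lia]).
  pose proof (exp_pos eps).
  field; repeat split; nra.
Qed.

Lemma row_two_valued (k L : nat) (eps : R) (q : nat -> nat -> R) (j : nat) :
  in_D_eps_E k L eps q -> (1 <= j <= L)%nat ->
  forall i, (1 <= i <= k)%nat ->
    q j i = min1 k (q j) \/ q j i = min1 k (q j) * exp eps.
Proof.
  intros [_ [_ HD]] Hj i Hi.
  destruct (HD j i Hj Hi) as [Hm Hratio].
  replace (q j i) with (q j i / min1 k (q j) * min1 k (q j)) by (field; lra).
  destruct Hratio as [-> | ->]; [left | right]; ring.
Qed.

Theorem lemma1 (k L : nat) (eps : R) (q : nat -> nat -> R) (dstar : nat) :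
  (2 <= k)%nat -> 0 < eps -> in_D_eps_E k L eps q -> is_dstar k eps dstar ->
  forall j, (1 <= j <= L)%nat ->
    sum1 k (fun i => q j i ^ 2 / qbar k q j ^ 2) <=
    INR k * (1 + (exp eps - 1) ^ 2 *
      (INR dstar * (INR k - INR dstar)) /
      (INR dstar * exp eps + INR k - INR dstar) ^ 2).
Proof.
  intros Hk _ HQ Hdstar j Hj.
  assert (Hm : 0 < min1 k (q j)) by (apply (proj2 (proj2 HQ) j 1%nat Hj); lia).
  unfold qbar; change (sum1 k (fun i => q j i)) with (sum1 k (q j)).
  destruct (second_moment_ratio_two_valued k eps (min1 k (q j)) (q j))
    as [a [Ha ->]]; [lia | exact Hm | exact (row_two_valued k L eps q j HQ Hj) |].
  rewrite <- Rmult_div_assoc; fold (dgain k eps dstar).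
  apply Rmult_le_compat_l; [apply pos_INR |].
  apply Rplus_le_compat_l, Rmult_le_compat_l; [apply pow2_ge_0 |].
  exact (dgain_le_dstar k eps dstar a Hdstar Ha).
Qed.
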